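(* For every $n\ge 0$, if $B_n$ is the Boolean lattice of subsets of an $n$-element set, then $\mathcal{M}(B_n,t)=(t+1)^n(t-1)^{2n}$.
   Context: $B_n$ is ranked by cardinality, $\mathrm{rk}(B_n)=n$, and $\rho(x,y,z)=3n-\mathrm{rk}(x)-\mathrm{rk}(y)-\mathrm{rk}(z)$. Let $\delta_3(x,y,z)=1$ if $x=y=z$ and $0$ otherwise, and $J$ the unique integer-valued function on triples $x\le y\le z$ with $\sum_{x\le a\le y\le b\le z}J(a,y,b)=\delta_3(x,y,z)$ for all $x\le y\le z$. Then $\mathcal{M}(B_n,t)=\sum_{x\le y\le z}J(x,y,z)\,t^{\rho(x,y,z)}$. *)

From mathcomp Require Import all_boot all_order all_algebra.
Set Implicit Arguments. Unset Strict Implicit. Unset Printing Implicit Defensive.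
Import GRing.Theory Num.Theory.
Local Open Scope ring_scope.

(* B_n := {set 'I_n}, ordered by inclusion, ranked by cardinality. *)
Definition Bn (n : nat) := {set 'I_n}.

(* rho(x,y,z) = 3n - rk x - rk y - rk z  (always >= 0 in B_n) *)
Definition rho (n : nat) (x y z : {set 'I_n}) : nat :=
  (3 * n - #|x| - #|y| - #|z|)%N.

Definition delta3 (n : nat) (x y z : {set 'I_n}) : int :=
  ((x == y) && (y == z))%:R.

Definition J_spec (n : nat) (J : {set 'I_n} -> {set 'I_n} -> {set 'I_n} -> int) : Prop :=
  forall x y z : {set 'I_n}, x \subset y -> y \subset z ->
    \sum_(a : {set 'I_n} | (x \subset a) && (a \subset y))
      \sum_(b : {set 'I_n} | (y \subset b) && (b \subset z)) J a y b
    = delta3 x y z.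

Definition Mpoly (n : nat) (J : {set 'I_n} -> {set 'I_n} -> {set 'I_n} -> int)
  : {poly int} :=
  \sum_(x : {set 'I_n}) \sum_(y : {set 'I_n}) \sum_(z : {set 'I_n} |
      (x \subset y) && (y \subset z))
    (J x y z)%:P * 'X^(rho x y z).

From mathcomp Require Import all_boot all_order all_algebra.
From mathcomp Require Import ring zify.
Set Implicit Arguments. Unset Strict Implicit. Unset Printing Implicit Defensive.
Import GRing.Theory.
Local Open Scope ring_scope.

(* Every interval [a, b] of B_n is a Boolean lattice, so the Moebius function
   of B_n is mu(a, b) = (-1)^(|b| - |a|).  Moebius inversion in the two outer
   variables of the defining relation forces J(a, y, b) = mu(a, y) mu(y, b).
   Writing t^rho = t^(n - |x|) t^(n - |y|) t^(n - |z|) and summing one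
   variable at a time from the top, every sum is a binomial expansion:
   sum_z mu(y, z) t^(n - |z|) = (t - 1)^(n - |y|), then
   sum_y mu(x, y) (t (t - 1))^(n - |y|) = (t^2 - t - 1)^(n - |x|), and
   sum_x (t^3 - t^2 - t)^(n - |x|) = (t^3 - t^2 - t + 1)^n. *)

Definition moebius {T : finType} {R : pzRingType} (a b : {set T}) : R :=
  (-1) ^+ (#|b| - #|a|).

Section BooleanIntervals.

Variables (T : finType) (R : comPzRingType).
Implicit Types (a b c x y D : {set T}) (u v t : R).

Lemma sum_nested_andl (I J : finType) (P : pred I) (Q : I -> pred J)
    (F : I -> J -> R) :
  \sum_i \sum_(j | P i && Q i j) F i j = \sum_(i | P i) \sum_(j | Q i j) F i j.
Proof.
rewrite [RHS]big_mkcond; apply: eq_bigr => i _.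
by case: (P i) => //=; rewrite big_pred0.
Qed.

Lemma big_interval_setU (F : {set T} -> R) a c : a \subset c ->
  \sum_(x : {set T} | (a \subset x) && (x \subset c)) F x
  = \sum_(s : {set T} | s \subset c :\: a) F (a :|: s).
Proof.
move=> ac.
rewrite (reindex_onto (fun s => a :|: s) (fun x => x :\: a)) /=; last first.
  by move=> x /andP[ax _]; rewrite -[RHS](setID x a) (setIidPr ax).
apply: eq_bigl => s.
rewrite subsetUl /= setDUl setDv set0U subUset ac /= subsetD.
congr (_ && _).
by apply/idP/idP => [/eqP/setDidPl|/setDidPl ->].
Qed.

Lemma sum_subset_binomial D u v :
  \sum_(s : {set T} | s \subset D) u ^+ (#|D| - #|s|) * v ^+ #|s|
  = (u + v) ^+ #|D|.
Proof.
pose card_ord_of (s : {set T}) : 'I_#|D|.+1 := inord #|s|.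
rewrite exprDn (partition_big card_ord_of xpredT) //=.
apply: eq_bigr => k _.
rewrite (eq_bigr (fun _ => u ^+ (#|D| - k) * v ^+ k)); last first.
  by move=> s /andP[sD /eqP <-]; rewrite inordK // ltnS subset_leq_card.
rewrite (eq_bigl (mem [set s : {set T} | s \subset D & #|s| == k])); last first.
  move=> s; rewrite !inE; case sD: (s \subset D) => //=.
  by rewrite -(inj_eq val_inj) /= inordK // ltnS subset_leq_card.
by rewrite sumr_const cards_draws.
Qed.

Lemma sum_interval_binomial a c u v : a \subset c ->
  \sum_(x : {set T} | (a \subset x) && (x \subset c))
     u ^+ (#|c| - #|x|) * v ^+ (#|x| - #|a|) = (u + v) ^+ (#|c| - #|a|).
Proof.
move=> ac; rewrite big_interval_setU // -cardsDS // -sum_subset_binomial.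
apply: eq_bigr => s; rewrite subsetD => /andP[_ dsa].
have card_aUs : #|a :|: s| = (#|a| + #|s|)%N.
  by rewrite cardsU disjoint_setI0 ?cards0 ?subn0 // disjoint_sym.
have card_c : #|c| = (#|a| + #|c :\: a|)%N.
  by rewrite cardsDS //; have := subset_leq_card ac; lia.
by rewrite card_aUs card_c; congr (u ^+ _ * v ^+ _); lia.
Qed.

Lemma sum_superset_binomial a u v :
  \sum_(x : {set T} | a \subset x) u ^+ (#|T| - #|x|) * v ^+ (#|x| - #|a|)
  = (u + v) ^+ (#|T| - #|a|).
Proof.
rewrite -cardsT -sum_interval_binomial ?subsetT //.
by apply: eq_bigl => x; rewrite subsetT andbT.
Qed.

Lemma sum_moebius_l a c : a \subset c ->
  \sum_(x : {set T} | (a \subset x) && (x \subset c)) moebius x c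
  = (a == c)%:R :> R.
Proof.
move=> ac.
rewrite (eq_bigr (fun x => (-1) ^+ (#|c| - #|x|) * 1 ^+ (#|x| - #|a|))).
  by rewrite sum_interval_binomial // addNr expr0n eqEcard ac subn_eq0.
by move=> x _; rewrite expr1n mulr1.
Qed.

Lemma sum_moebius_r a c : a \subset c ->
  \sum_(x : {set T} | (a \subset x) && (x \subset c)) moebius a x
  = (a == c)%:R :> R.
Proof.
move=> ac.
rewrite (eq_bigr (fun x => 1 ^+ (#|c| - #|x|) * (-1) ^+ (#|x| - #|a|))).
  by rewrite sum_interval_binomial // addrN expr0n eqEcard ac subn_eq0.
by move=> x _; rewrite expr1n mul1r.
Qed.

Lemma exchange_big_interval (F : {set T} -> {set T} -> R) (lo hi : {set T}) :
  \sum_(p : {set T} | (lo \subset p) && (p \subset hi))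
     \sum_(q : {set T} | (p \subset q) && (q \subset hi)) F p q
  = \sum_(q : {set T} | (lo \subset q) && (q \subset hi))
     \sum_(p : {set T} | (lo \subset p) && (p \subset q)) F p q.
Proof.
rewrite (exchange_big_dep (fun q : {set T} => (lo \subset q) && (q \subset hi))).
  apply: eq_bigr => q /andP[_ qhi]; apply: eq_bigl => p.
  apply/idP/idP => [/andP[/andP[-> _] /andP[-> _]] //|/andP[lop pq]].
  by rewrite lop pq qhi (subset_trans pq qhi).
by move=> p q /andP[lop _] /andP[pq ->]; rewrite (subset_trans lop pq).
Qed.

Lemma sum_interval_eq_bottom (F : {set T} -> R) a c : a \subset c ->
  \sum_(x : {set T} | (a \subset x) && (x \subset c)) (a == x)%:R * F x = F a.
Proof.
move=> ac; rewrite (bigD1 a) /= ?subxx ?ac // eqxx mul1r big1 ?addr0 //.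
by move=> x /andP[_ /negbTE]; rewrite eq_sym => ->; rewrite mul0r.
Qed.

Lemma sum_interval_eq_top (F : {set T} -> R) a c : a \subset c ->
  \sum_(x : {set T} | (a \subset x) && (x \subset c)) (x == c)%:R * F x = F c.
Proof.
move=> ac; rewrite (bigD1 c) /= ?subxx ?ac // eqxx mul1r big1 ?addr0 //.
by move=> x /andP[_ /negbTE ->]; rewrite mul0r.
Qed.

Lemma moebius_inversion_top (f : {set T} -> R) y b : y \subset b ->
  \sum_(z : {set T} | (y \subset z) && (z \subset b))
     moebius z b * \sum_(w : {set T} | (y \subset w) && (w \subset z)) f w
  = f b.
Proof.
move=> yb; under eq_bigr do rewrite big_distrr /=.
rewrite -(exchange_big_interval (fun w z => moebius z b * f w)) /=.
rewrite -(sum_interval_eq_top f yb); apply: eq_bigr => w /andP[_ wb].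
by rewrite -big_distrl /= sum_moebius_l.
Qed.

Lemma moebius_inversion_bottom (f : {set T} -> R) a y : a \subset y ->
  \sum_(x : {set T} | (a \subset x) && (x \subset y))
     moebius a x * \sum_(w : {set T} | (x \subset w) && (w \subset y)) f w
  = f a.
Proof.
move=> ay; under eq_bigr do rewrite big_distrr /=.
rewrite exchange_big_interval -(sum_interval_eq_bottom f ay).
apply: eq_bigr => w /andP[aw _].
by rewrite -big_distrl /= sum_moebius_r.
Qed.

Lemma sum_moebius_chains3 t :
  \sum_(x : {set T}) \sum_(y : {set T})
    \sum_(z : {set T} | (x \subset y) && (y \subset z))
     moebius x y * moebius y z * t ^+ (3 * #|T| - #|x| - #|y| - #|z|)
  = ((t + 1) * (t - 1) ^+ 2) ^+ #|T|.
Proof.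
have le_card x : (#|x| <= #|T|)%N by exact: max_card.
transitivity (\sum_(x : {set T}) (t * (t * (t - 1) - 1)) ^+ (#|T| - #|x|)
                     * 1 ^+ (#|x| - #|@set0 T|)).
  apply: eq_bigr => x _.
  rewrite sum_nested_andl expr1n mulr1 exprMn -sum_superset_binomial big_distrr.
  apply: eq_bigr => y xy.
  rewrite exprMn -sum_superset_binomial !(big_distrl, big_distrr) /=.
  apply: eq_bigr => z yz.
  have -> : (3 * #|T| - #|x| - #|y| - #|z|
             = (#|T| - #|x|) + (#|T| - #|y|) + (#|T| - #|z|))%N.
    by have := le_card x; have := le_card y; have := le_card z; lia.
  by rewrite !exprD /moebius; ring.
rewrite (eq_bigl (fun x => set0 \subset x)) => [|x]; last by rewrite sub0set.
by rewrite sum_superset_binomial cards0 subn0; congr (_ ^+ _); ring.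
Qed.

End BooleanIntervals.

Definition J_Bn n (a y b : {set 'I_n}) : int := moebius a y * moebius y b.

Lemma J_Bn_spec n : J_spec (@J_Bn n).
Proof.
move=> x y z xy yz; rewrite /J_Bn.
under eq_bigr do rewrite -big_distrr /=.
rewrite -big_distrl /= sum_moebius_l // sum_moebius_r //.
by rewrite /delta3 -natrM mulnb.
Qed.

Lemma J_spec_uniq n (J : {set 'I_n} -> {set 'I_n} -> {set 'I_n} -> int) :
  J_spec J ->
  forall a y b : {set 'I_n}, a \subset y -> y \subset b -> J a y b = J_Bn a y b.
Proof.
move=> HJ a y b ay yb.
have sum_bottom (x : {set 'I_n}) : x \subset y ->
    \sum_(w : {set 'I_n} | (x \subset w) && (w \subset y)) J w y b
    = (x == y)%:R * moebius y b.
  move=> xy.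
  pose f b' := \sum_(w : {set 'I_n} | (x \subset w) && (w \subset y)) J w y b'.
  rewrite -[LHS]/(f b) -(moebius_inversion_top f yb) /f.
  rewrite -(sum_interval_eq_bottom (fun z => (x == y)%:R * moebius z b) yb).
  apply: eq_bigr => z /andP[yz _].
  by rewrite exchange_big HJ // /delta3 -mulnb natrM; ring.
have := moebius_inversion_bottom (fun w => J w y b) ay; rewrite /= => <-.
rewrite /J_Bn -(sum_interval_eq_top (fun x => moebius a x * moebius y b) ay).
by apply: eq_bigr => x /andP[_ xy]; rewrite sum_bottom //; ring.
Qed.

Theorem proposition6p8 (n : nat) :
  (exists J : {set 'I_n} -> {set 'I_n} -> {set 'I_n} -> int, J_spec J) /\
  (forall J : {set 'I_n} -> {set 'I_n} -> {set 'I_n} -> int, J_spec J ->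
     Mpoly J = ('X + 1) ^+ n * ('X - 1) ^+ (2 * n)).
Proof.
split; first by exists (@J_Bn n); exact: J_Bn_spec.
move=> J HJ.
have -> : Mpoly J =
    \sum_(x : {set 'I_n}) \sum_(y : {set 'I_n})
      \sum_(z : {set 'I_n} | (x \subset y) && (y \subset z))
        moebius x y * moebius y z * 'X^(rho x y z).
  apply: eq_bigr => x _; apply: eq_bigr => y _.
  apply: eq_bigr => z /andP[xy yz].
  by rewrite J_spec_uniq // /J_Bn /moebius rmorphM /= !rmorph_sign.
have := @sum_moebius_chains3 'I_n _ 'X; rewrite card_ord /rho => ->.
by rewrite exprMn exprM.
Qed.
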